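(* Let $\mathbf L\in\mathbb R^{N\times N}$ be a Laplacian matrix (symmetric, off-diagonal entries $\le0$, $\mathbf L\mathbf 1_N=\mathbf 0$) with second-smallest eigenvalue $\rho_2>0$, and $\hat{\mathbf L}=\mathbf L\otimes\mathbf I_d$. Let $\mathbf A\in\mathbb R^{Nd\times Nd}$ be symmetric with all eigenvalues in $[\mu,L]$, $0<\mu\le L$, let $U>0$ and $\mathbf B=\mathbf A+U\hat{\mathbf L}$. Then for every $\mathbf v\in\mathbb R^{Nd}$ orthogonal to the column space of $\mathbf 1_N\otimes\mathbf I_d$ (i.e., $(\mathbf 1_N\otimes\mathbf I_d)^\top\mathbf v=\mathbf 0$), $$\|\mathbf B^{-1}\mathbf v\|\le\frac1U\cdot\frac{L}{\mu\rho_2}\|\mathbf v\|.$$ *)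

From HB Require Import structures.
From mathcomp Require Import all_boot all_order all_algebra.
From mathcomp Require Export mxtens.
Set Implicit Arguments. Unset Strict Implicit. Unset Printing Implicit Defensive.
Import Order.TTheory GRing.Theory Num.Theory.
Local Open Scope ring_scope.

Definition vnorm (R : rcfType) (n : nat) (v : 'cV[R]_n) : R :=
  Num.sqrt (\sum_(i < n) v i 0 ^+ 2).

Definition ones (R : rcfType) (n : nat) : 'cV[R]_n := const_mx 1.

Definition is_laplacian (R : rcfType) (n : nat) (L : 'M[R]_n) : Prop :=
  [/\ L^T = L, (forall i j : 'I_n, i != j -> L i j <= 0) & L *m ones R n = 0].

(* r is the second-smallest eigenvalue of M counted with multiplicity:
   the characteristic polynomial of M factors as prod (X - x) over a
   nondecreasingly sorted list s of eigenvalues, and r is s`_1. *)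
Definition second_smallest_eig (R : rcfType) (n : nat) (M : 'M[R]_n) (r : R)
  : Prop :=
  exists s : seq R,
    [/\ sorted <=%R s, char_poly M = \prod_(x <- s) ('X - x%:P) &
        nth 0 s 1 = r].

(* Write J = 1_N (x) I_d, x = B^-1 v, and let x' be the orthogonal projection
   of x onto ker J^T.  Both v and the range of L (x) I_d are orthogonal to the
   range of J.  Pairing B x = v with x therefore gives
     U rho2 |x'|^2 <= U x.(L (x) I_d)x <= x.Bx = x'.v <= |x'| |v|,
     mu |x|^2 <= x.Ax = x'.Ax = Ax'.x <= L |x'| |x|,
   and multiplying the two bounds proves the claim.  The first inequality is
   applied to each of the d blocks of x': since rho2 > 0, zero is a simple
   eigenvalue of the Laplacian, with eigenvector 1_N, and all its other
   eigenvalues are at least rho2. *)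

From HB Require Import structures.
From mathcomp Require Import all_boot all_order all_algebra.
From mathcomp Require Import mxtens complex sesquilinear spectral ring.
Import Order.TTheory GRing.Theory Num.Theory Num.Def.
Set Implicit Arguments. Unset Strict Implicit. Unset Printing Implicit Defensive.
Local Open Scope ring_scope.
Local Open Scope sesquilinear_scope.

Section EuclideanDot.
Variable R : rcfType.

Definition vdot n (a b : 'cV[R]_n) : R := (a^T *m b) 0 0.

Lemma vdotE n (a b : 'cV[R]_n) : vdot a b = \sum_i a i 0 * b i 0.
Proof. by rewrite /vdot mxE; apply: eq_bigr => i _; rewrite mxE. Qed.

Lemma vdotC n (a b : 'cV[R]_n) : vdot a b = vdot b a.
Proof. by rewrite !vdotE; apply: eq_bigr => i _; rewrite mulrC. Qed.

Lemma vdot0r n (a : 'cV[R]_n) : vdot a 0 = 0.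
Proof. by rewrite /vdot mulmx0 mxE. Qed.

Lemma vdot0l n (a : 'cV[R]_n) : vdot 0 a = 0.
Proof. by rewrite vdotC vdot0r. Qed.

Lemma vdotDr n (a b c : 'cV[R]_n) : vdot a (b + c) = vdot a b + vdot a c.
Proof. by rewrite /vdot mulmxDr mxE. Qed.

Lemma vdotBr n (a b c : 'cV[R]_n) : vdot a (b - c) = vdot a b - vdot a c.
Proof. by rewrite /vdot mulmxBr !mxE. Qed.

Lemma vdotZr n (a b : 'cV[R]_n) k : vdot a (k *: b) = k * vdot a b.
Proof. by rewrite /vdot -scalemxAr mxE. Qed.

Lemma vdotBl n (a b c : 'cV[R]_n) : vdot (b - c) a = vdot b a - vdot c a.
Proof. by rewrite vdotC vdotBr !(vdotC a). Qed.

Lemma vdotZl n (a b : 'cV[R]_n) k : vdot (k *: b) a = k * vdot b a.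
Proof. by rewrite vdotC vdotZr vdotC. Qed.

Lemma vdot_mulmxr n m (a : 'cV[R]_n) (X : 'M[R]_(n, m)) b :
  vdot a (X *m b) = vdot (X^T *m a) b.
Proof. by rewrite /vdot trmx_mul trmxK mulmxA. Qed.

Lemma vdotvv_ge0 n (a : 'cV[R]_n) : 0 <= vdot a a.
Proof. by rewrite vdotE; apply: sumr_ge0 => i _; rewrite -expr2 sqr_ge0. Qed.

Lemma vdotvv_eq0 n (a : 'cV[R]_n) : vdot a a = 0 -> a = 0.
Proof.
rewrite vdotE => /psumr_eq0P sq0; apply/matrixP => i j; rewrite [j]ord1 mxE.
have /eqP := sq0 (fun k _ => ltac:(by rewrite -expr2 sqr_ge0)) i isT.
by rewrite mulf_eq0 orbb => /eqP.
Qed.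

Lemma vnormE n (a : 'cV[R]_n) : vnorm a = Num.sqrt (vdot a a).
Proof.
by rewrite /vnorm vdotE; congr Num.sqrt; apply: eq_bigr => i _; rewrite expr2.
Qed.

Lemma vnorm_ge0 n (a : 'cV[R]_n) : 0 <= vnorm a.
Proof. by rewrite vnormE sqrtr_ge0. Qed.

Lemma vnorm0 n : vnorm (0 : 'cV[R]_n) = 0.
Proof. by rewrite vnormE vdot0r sqrtr0. Qed.

Lemma vnorm_sqr n (a : 'cV[R]_n) : vnorm a ^+ 2 = vdot a a.
Proof. by rewrite vnormE sqr_sqrtr // vdotvv_ge0. Qed.

Lemma vdot_le_vnorm n (a b : 'cV[R]_n) : vdot a b <= vnorm a * vnorm b.
Proof.
set c := vdot a b.
suff cs : c ^+ 2 <= vdot a a * vdot b b.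
  apply: le_trans (ler_norm c) _.
  rewrite -sqrtr_sqr !vnormE -sqrtrM ?vdotvv_ge0 //.
  by rewrite ler_sqrt // mulr_ge0 ?vdotvv_ge0.
have [b0|bn0] := eqVneq (vdot b b) 0.
  by rewrite /c b0 mulr0 (vdotvv_eq0 b0) vdot0r expr0n.
have bpos : 0 < vdot b b by rewrite lt_def bn0 vdotvv_ge0.
have := vdotvv_ge0 (vdot b b *: a - c *: b).
rewrite vdotBl !vdotBr !vdotZl !vdotZr (vdotC b a) -/c => ge0.
rewrite -(ler_pM2r bpos) -subr_ge0; apply: le_trans ge0 _.
by rewrite le_eqVlt; apply/orP; left; apply/eqP; ring.
Qed.

Lemma vnorm_gt0 n (a : 'cV[R]_n) : a != 0 -> 0 < vnorm a.
Proof.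
move=> a_neq0; rewrite lt_def vnorm_ge0 andbT; apply: contra a_neq0 => /eqP a0.
by apply/eqP/vdotvv_eq0; rewrite -vnorm_sqr a0 expr0n.
Qed.

Lemma vnorm_mulr_le_cancel n (a : 'cV[R]_n) (s t : R) :
  (a = 0 -> s <= t) -> s * vnorm a <= t * vnorm a -> s <= t.
Proof.
have [-> st _ //|a_neq0 _] := eqVneq a 0; first exact: st.
by rewrite ler_pM2r // vnorm_gt0.
Qed.

End EuclideanDot.

Lemma char_poly_invmx_conj (R : comUnitRingType) n (V M : 'M[R]_n) :
  V \in unitmx -> char_poly (invmx V *m M *m V) = char_poly M.
Proof.
move=> uV; rewrite /char_poly.
have -> : char_poly_mx (invmx V *m M *m V) =
    map_mx polyC (invmx V) *m char_poly_mx M *m map_mx polyC V.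
  rewrite /char_poly_mx mulmxBr mulmxBl !map_mxM; congr (_ - _).
  by rewrite -mulmxA -scalar_mxC mulmxA -map_mxM mulVmx // map_mx1 mul1mx.
rewrite !det_mulmx !det_map_mx mulrC mulrA -rmorphM -det_mulmx mulmxV //.
by rewrite det1 rmorph1 mul1r.
Qed.

Lemma unitarymx_trC_mulmx (C : numClosedFieldType) n (P : 'M[C]_n) :
  P \is unitarymx -> P^t* *m P = 1%:M.
Proof. by move=> Pu; rewrite -invmx_unitary // mulVmx // unitarymx_unit. Qed.

Section HermitianSpectral.
Variables (C : numClosedFieldType) (n : nat) (M : 'M[C]_n).
Hypothesis M_herm : M \is hermsymmx.

Local Notation P := (spectralmx M).
Local Notation D := (spectral_diag M).

Lemma spectralK : P^t* *m P = 1%:M.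
Proof. exact/unitarymx_trC_mulmx/spectral_unitarymx. Qed.

Lemma hermitian_spectral_decomp : M = P^t* *m diag_mx D *m P.
Proof.
rewrite -invmx_unitary ?spectral_unitarymx //.
exact/orthomx_spectralP/hermitian_normalmx.
Qed.

Lemma spectral_mulmxtC : P *m P^t* = 1%:M.
Proof. exact/unitarymxP/spectral_unitarymx. Qed.

Lemma hermitian_spectral_mulmx (z : 'cV[C]_n) :
  P *m (M *m z) = diag_mx D *m (P *m z).
Proof.
by rewrite [in M *m z]hermitian_spectral_decomp !mulmxA spectral_mulmxtC mul1mx.
Qed.

Lemma spectral_diag_entry_real i : D 0 i \is Num.real.
Proof. by have /mxOverP := hermitian_spectral_diag_real M_herm; apply. Qed.

Lemma hermitian_spectral_diag_eigenvalue i : eigenvalue M (D 0 i).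
Proof.
apply/eigenvalueP; exists (row i P).
  rewrite -row_mul [X in row i (_ *m X)]hermitian_spectral_decomp !mulmxA.
  by rewrite spectral_mulmxtC mul1mx mul_diag_mx; apply/rowP => j; rewrite !mxE.
apply/negP => /eqP Pi0.
have /row_freeP [Q PQ] : row_free P by rewrite row_free_unit spectral_unit.
have : row i (P *m Q) = 0 by rewrite row_mul Pi0 mul0mx.
by rewrite PQ => /rowP /(_ i); rewrite !mxE eqxx /= => /eqP; rewrite oner_eq0.
Qed.

Lemma char_poly_hermitian :
  char_poly M = \prod_(i < n) ('X - (D 0 i)%:P).
Proof.
rewrite [in char_poly M]hermitian_spectral_decomp -invmx_unitary ?spectral_unitarymx //.
rewrite char_poly_invmx_conj ?spectral_unit // char_poly_trig ?diag_mx_is_trig //.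
by apply: eq_bigr => i _; rewrite mxE eqxx.
Qed.

Lemma trC_mulmx_cV m (a b : 'cV[C]_m) :
  (a^t* *m b) 0 0 = \sum_i (a i 0)^* * b i 0.
Proof. by rewrite mxE; apply: eq_bigr => i _; rewrite !mxE. Qed.

Lemma spectral_cnorm (z : 'cV[C]_n) :
  (z^t* *m z) 0 0 = \sum_i `|(P *m z) i 0| ^+ 2.
Proof.
have -> : z^t* *m z = (P *m z)^t* *m (P *m z).
  by rewrite trmx_mul map_mxM -!mulmxA (mulmxA (P^t*)) spectralK mul1mx.
by rewrite trC_mulmx_cV; apply: eq_bigr => i _; rewrite normCK mulrC.
Qed.

Lemma hermitian_form_spectral (z : 'cV[C]_n) :
  (z^t* *m M *m z) 0 0 = \sum_i D 0 i * `|(P *m z) i 0| ^+ 2.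
Proof.
have -> : z^t* *m M *m z = (P *m z)^t* *m (diag_mx D *m (P *m z)).
  by rewrite [in z^t* *m M]hermitian_spectral_decomp trmx_mul map_mxM !mulmxA.
rewrite mul_diag_mx trC_mulmx_cV; apply: eq_bigr => i _.
by rewrite !mxE normCK mulrCA; congr (_ * _); apply: mulrC.
Qed.

Lemma hermitian_form_ge_simple_kernel (rho : C) (o z : 'cV[C]_n) :
  M *m o = 0 -> o != 0 ->
  (forall i j, D 0 i = 0 -> D 0 j = 0 -> i = j) ->
  (forall i, D 0 i != 0 -> rho <= D 0 i) ->
  o^t* *m z = 0 -> rho * (z^t* *m z) 0 0 <= (z^t* *m M *m z) 0 0.
Proof.
move=> Mo o_neq0 D0_inj rho_le oz; set u := P *m o; set w := P *m z.
have Du i : D 0 i * u i 0 = 0.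
  have := hermitian_spectral_mulmx o; rewrite Mo mulmx0 -/u.
  by move=> /esym /matrixP /(_ i 0); rewrite mul_diag_mx !mxE.
have u_off i j : D 0 i = 0 -> j != i -> u j 0 = 0.
  move=> Di0 ji; have /eqP := Du j; rewrite mulf_eq0 => /orP [/eqP Dj0|/eqP //].
  by move: ji; rewrite (D0_inj _ _ Dj0 Di0) eqxx.
have uw : \sum_j (u j 0)^* * w j 0 = 0.
  rewrite -trC_mulmx_cV /u /w trmx_mul map_mxM -mulmxA (mulmxA (P^t*)) spectralK.
  by rewrite mul1mx oz mxE.
have w_ker i : D 0 i = 0 -> w i 0 = 0.
  move=> Di0; have ui_neq0 : u i 0 != 0.
    apply: contra o_neq0 => /eqP ui0; apply/eqP.
    have u0 : u = 0.
      apply/matrixP => j k; rewrite [k]ord1 [RHS]mxE.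
      by have [->|ji] := eqVneq j i; [exact: ui0 | exact: u_off ji].
    by rewrite -[o]mul1mx -spectralK -mulmxA -/u u0 mulmx0.
  move: uw; rewrite (bigD1 i) //= big1 ?addr0 => [/eqP|j ji].
    by rewrite mulf_eq0 conjC_eq0 (negbTE ui_neq0) => /eqP.
  by rewrite (u_off i j) // conjC0 mul0r.
rewrite spectral_cnorm hermitian_form_spectral mulr_sumr; apply: ler_sum => i _.
have [Di0|Di_neq0] := eqVneq (D 0 i) 0.
  by rewrite -/w w_ker // normr0 expr0n /= !mulr0.
by rewrite ler_wpM2r ?exprn_ge0 ?rho_le.
Qed.

End HermitianSpectral.

(* The spectral theorem is available for hermitian matrices over a
   numClosedFieldType, so real symmetric matrices are diagonalized in R[i]. *)
Section RealSymmetric.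
Variable R : rcfType.
Local Notation toC := (real_complex R).

Lemma conjC_real_complex (r : R) : (toC r)^* = toC r.
Proof. exact: conjc_real. Qed.

Lemma map_real_complex_trC m p (X : 'M[R]_(m, p)) :
  (map_mx toC X)^t* = map_mx toC X^T.
Proof. by apply/matrixP => i j; rewrite !mxE conjC_real_complex. Qed.

Lemma map_real_complex_hermsym n (A : 'M[R]_n) :
  A^T = A -> map_mx toC A \is hermsymmx.
Proof.
by move=> AT; apply/is_hermitianmxP; rewrite expr0 scale1r map_real_complex_trC AT.
Qed.

Lemma real_complex_vdot n (a b : 'cV[R]_n) :
  toC (vdot a b) = ((map_mx toC a)^t* *m map_mx toC b) 0 0.
Proof. by rewrite map_real_complex_trC -map_mxM mxE. Qed.

Lemma real_complex_form n (a : 'cV[R]_n) (X : 'M[R]_n) :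
  toC (vdot a (X *m a)) = ((map_mx toC a)^t* *m map_mx toC X *m map_mx toC a) 0 0.
Proof. by rewrite real_complex_vdot map_mxM mulmxA. Qed.

Lemma symmetric_spectral_diag n (A : 'M[R]_n) i : A^T = A ->
  exists2 k, spectral_diag (map_mx toC A) 0 i = toC k & eigenvalue A k.
Proof.
move=> AT; have Ah := map_real_complex_hermsym AT.
have /complex_realP [k Dk] := spectral_diag_entry_real Ah i.
exists k => //.
by have := hermitian_spectral_diag_eigenvalue Ah i; rewrite Dk eigenvalue_map.
Qed.

Lemma symmetric_form_ge n (A : 'M[R]_n) (mu : R) : A^T = A ->
  (forall a, eigenvalue A a -> mu <= a) ->
  forall y, mu * vdot y y <= vdot y (A *m y).
Proof.
move=> AT eigA y; have Ah := map_real_complex_hermsym AT.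
rewrite -lecR rmorphM /= real_complex_form real_complex_vdot.
rewrite (hermitian_form_spectral Ah) (spectral_cnorm (map_mx toC A)) mulr_sumr.
apply: ler_sum => i _; have [k -> /eigA mu_le_k] := symmetric_spectral_diag i AT.
by rewrite ler_wpM2r ?exprn_ge0 // lecR.
Qed.

Lemma symmetric_vnorm_le n (A : 'M[R]_n) (L : R) : A^T = A -> 0 <= L ->
  (forall a, eigenvalue A a -> `|a| <= L) ->
  forall y, vnorm (A *m y) <= L * vnorm y.
Proof.
move=> AT L0 eigA y; have Ah := map_real_complex_hermsym AT.
rewrite -(ler_pXn2r (isT : (0 < 2)%N)) ?nnegrE ?mulr_ge0 ?vnorm_ge0 //.
rewrite exprMn !vnorm_sqr -lecR rmorphM /= !real_complex_vdot map_mxM.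
rewrite !(spectral_cnorm (map_mx toC A)) (hermitian_spectral_mulmx Ah) mulr_sumr.
apply: ler_sum => i _; rewrite mul_diag_mx mxE normrM exprMn.
have [k -> /eigA k_le_L] := symmetric_spectral_diag i AT.
have k_real : toC k \is Num.real by apply/complex_realP; exists k.
rewrite ler_wpM2r ?exprn_ge0 // real_normK // -rmorphXn /= lecR.
by rewrite -real_normK ?num_real // ler_sqr ?nnegrE.
Qed.

End RealSymmetric.

Lemma count_mem_le1_inj (I : finType) (T : eqType) (f : I -> T) (x : T) :
  (count_mem x [seq f i | i <- enum I] <= 1)%N ->
  forall i j, f i = x -> f j = x -> i = j.
Proof.
move=> cnt i j fi fj; apply/eqP; apply: contraTT cnt => ij; rewrite -ltnNge.
rewrite count_map -size_filter (@uniq_leq_size _ [:: i; j]) //= ?inE ?ij //.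
by move=> k; rewrite !inE mem_filter mem_enum andbT /= => /orP [] /eqP ->; apply/eqP.
Qed.

Section SortedSpectrum.
Variables (R : realDomainType) (s : seq R).
Hypotheses (s_sorted : sorted <=%R s) (s1_gt0 : 0 < s`_1).

Lemma sorted_count0_le1 : (count_mem (0%R : R) s <= 1)%N.
Proof.
case: s s_sorted s1_gt0 => [|a [|b t]] /=; try by rewrite ltxx.
move=> /andP [_ bt] b_gt0.
have t_pos : {in t, forall x, 0 < x}.
  by move=> x /(allP (order_path_min le_trans bt)); apply: lt_le_trans.
rewrite (gt_eqF b_gt0) add0n; have -> : count_mem (0%R : R) t = 0%N.
  apply/eqP; rewrite -leqn0 leqNgt -has_count.
  by apply/hasPn => x /t_pos x_gt0; rewrite /= gt_eqF.
by case: (_ == _).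
Qed.

Lemma sorted_ge_nth1 : 0 \in s -> {in s, forall x, x != 0 -> s`_1 <= x}.
Proof.
case: s s_sorted s1_gt0 => [|a [|b t]] /=; try by rewrite ltxx.
move=> /andP [ab bt] b_gt0; have bt_ge := allP (order_path_min le_trans bt).
have t_pos x : x \in t -> 0 < x by move/bt_ge; apply: lt_le_trans.
rewrite !inE => s0 x /or3P [/eqP -> a_neq0| /eqP -> //| /bt_ge //].
case/or3P: s0 => [/eqP a0| /eqP b0| /t_pos]; first by rewrite a0 eqxx in a_neq0.
  by rewrite b0 ltxx in b_gt0.
by rewrite ltxx.
Qed.

End SortedSpectrum.

Section LaplacianForm.
Variable R : rcfType.
Local Notation toC := (real_complex R).

Lemma laplacian_form_ge N (Lap : 'M[R]_N) (rho2 : R) :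
  is_laplacian Lap -> second_smallest_eig Lap rho2 -> 0 < rho2 ->
  forall y, (ones R N)^T *m y = 0 -> rho2 * vdot y y <= vdot y (Lap *m y).
Proof.
move=> [LT _ L1] [s [s_sorted charL <-]] s1_gt0 y y1.
case: N Lap y LT L1 charL y1 => [|N] Lap y LT L1 charL y1.
  by rewrite !vdotE !big_ord0 mulr0.
set Lc := map_mx toC Lap; have Lc_herm := map_real_complex_hermsym LT.
set D := spectral_diag Lc.
have eig_in_s k : eigenvalue Lap k -> k \in s.
  by rewrite -root_prod_XsubC -charL -eigenvalue_root_char.
have s0 : 0 \in s.
  apply/eig_in_s/eigenvalueP; exists (ones R N.+1)^T.
    by rewrite scale0r -[Lap]LT -trmx_mul L1 trmx0.
  by apply/eqP => /matrixP /(_ 0 0); rewrite !mxE => /eqP; rewrite oner_eq0.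
have D0_inj i j : D 0 i = 0 -> D 0 j = 0 -> i = j.
  apply: (count_mem_le1_inj (f := fun i => D 0 i)).
  have /permP -> : perm_eq [seq D 0 i | i <- enum 'I_N.+1] (map toC s).
    apply: prod_XsubC_eq; rewrite big_map big_enum /= -char_poly_hermitian //.
    by rewrite big_map -(map_prod_XsubC toC) -charL map_char_poly.
  rewrite count_map (eq_count (a2 := pred1 0%R)) ?sorted_count0_le1 // => x /=.
  by rewrite fmorph_eq0.
have D_ge i : D 0 i != 0 -> toC s`_1 <= D 0 i.
  have [k -> /eig_in_s k_in_s] := symmetric_spectral_diag i LT.
  by rewrite fmorph_eq0 lecR => /(sorted_ge_nth1 s_sorted s1_gt0 s0 k_in_s).
rewrite -lecR rmorphM /= real_complex_form real_complex_vdot.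
apply: (hermitian_form_ge_simple_kernel Lc_herm (o := map_mx toC (ones R N.+1))) => //.
- by rewrite -map_mxM L1 map_mx0.
- by apply/eqP => /matrixP /(_ 0 0); rewrite !mxE rmorph1 => /eqP; rewrite oner_eq0.
- by rewrite map_real_complex_trC -map_mxM y1 map_mx0.
Qed.

End LaplacianForm.

Section TensorIdentity.
Variables (R : rcfType) (d : nat).
Local Notation I_d := (1%:M : 'M[R]_d).

Lemma sum_mxtens_index m n (F : 'I_(m * n) -> R) :
  \sum_t F t = \sum_i \sum_j F (mxtens_index (i, j)).
Proof.
rewrite pair_big /=; apply: reindex => //=.
exists (@mxtens_unindex m n) => t _; first by rewrite -surjective_pairing mxtens_indexK.
by rewrite -surjective_pairing mxtens_unindexK.
Qed.

Definition tens_col N (z : 'cV[R]_(N * d)) (k : 'I_d) : 'cV[R]_N :=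
  \col_i z (mxtens_index (i, k)) 0.

Lemma vdot_tens_col N (z z' : 'cV[R]_(N * d)) :
  vdot z z' = \sum_k vdot (tens_col z k) (tens_col z' k).
Proof.
rewrite vdotE sum_mxtens_index exchange_big /=; apply: eq_bigr => k _.
by rewrite vdotE; apply: eq_bigr => i _; rewrite !mxE.
Qed.

Lemma tens_col_mulmx m N (X : 'M[R]_(m, N)) (z : 'cV[R]_(N * d)) k :
  tens_col ((X *t I_d) *m z) k = X *m tens_col z k.
Proof.
apply/colP => i; rewrite !mxE sum_mxtens_index; apply: eq_bigr => j _.
rewrite (bigD1 k) //= big1 ?addr0 => [|l lk].
  by rewrite tensmxE !mxE eqxx mulr1.
by rewrite tensmxE !mxE eq_sym (negbTE lk) mulr0 mul0r.
Qed.

Lemma tens_form_ge p N (K : 'M[R]_(N, p)) (X : 'M[R]_N) (rho : R) :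
  (forall y, K^T *m y = 0 -> rho * vdot y y <= vdot y (X *m y)) ->
  forall z, (K *t I_d)^T *m z = 0 -> rho * vdot z z <= vdot z ((X *t I_d) *m z).
Proof.
rewrite trmx_tens trmx1 => X_ge z Kz.
rewrite !vdot_tens_col mulr_sumr; apply: ler_sum => k _.
by rewrite tens_col_mulmx X_ge // -tens_col_mulmx Kz; apply/colP => i; rewrite !mxE.
Qed.

Lemma ones_gram N : (ones R N)^T *m ones R N = (N%:R : R)%:M.
Proof.
apply/matrixP => i j; rewrite (ord1 i) (ord1 j) !mxE eqxx mulr1n.
rewrite (eq_bigr (fun _ => 1)) ?sumr_const ?card_ord // => k _.
by rewrite !mxE mulr1.
Qed.

Lemma tens_ones_gram N :
  (ones R N *t (1%:M : 'M[R]_d))^T *m (ones R N *t 1%:M) = (N%:R : R)%:M.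
Proof.
rewrite trmx_tens tensmx_mul ones_gram trmx1 mulmx1.
apply/matrixP => a b.
case: (mxtens_indexP a) => i0 k; case: (mxtens_indexP b) => j0 l.
rewrite tensmxE [i0]ord1 [j0]ord1 !mxE eqxx mulr1n.
rewrite (inj_eq (can_inj (@mxtens_indexK _ _))) xpair_eqE eqxx /=.
by case: (k == l); rewrite ?mulr1 ?mulr0.
Qed.

End TensorIdentity.

Section ResolventBound.
Variables (R : rcfType) (n p : nat) (A Lh : 'M[R]_n) (J : 'M[R]_(n, p)).
Variables (c mu L U rho : R).
Hypotheses (AT : A^T = A) (LhT : Lh^T = Lh) (LhJ : Lh *m J = 0).
Hypotheses (JtJ : J^T *m J = c%:M) (c_neq0 : c != 0).
Hypothesis A_ge : forall y, mu * vdot y y <= vdot y (A *m y).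
Hypothesis A_le : forall y, vnorm (A *m y) <= L * vnorm y.
Hypothesis Lh_ge : forall y, J^T *m y = 0 -> rho * vdot y y <= vdot y (Lh *m y).
Hypotheses (mu_gt0 : 0 < mu) (rho_ge0 : 0 <= rho) (U_ge0 : 0 <= U).

Local Notation B := (A + U *: Lh).

Definition proj_kerJt (z : 'cV[R]_n) := z - c^-1 *: (J *m (J^T *m z)).
Local Notation proj := proj_kerJt.

Lemma proj_kerJtP z : J^T *m proj z = 0.
Proof.
rewrite /proj mulmxBr -scalemxAr (mulmxA (J^T) J) JtJ mul_scalar_mx.
by rewrite scalerA mulVf // scale1r subrr.
Qed.

Lemma proj_kerJt0 : proj 0 = 0.
Proof. by rewrite /proj !mulmx0 scaler0 subr0. Qed.

Lemma mulmx_proj_kerJt z : Lh *m proj z = Lh *m z.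
Proof. by rewrite /proj mulmxBr -scalemxAr (mulmxA Lh J) LhJ mul0mx scaler0 subr0. Qed.

Lemma vdot_sub_proj_kerJt z y : vdot (z - proj z) (Lh *m y) = 0.
Proof.
rewrite /proj opprB addrC subrK vdotZl vdotC vdot_mulmxr mulmxA.
by rewrite -LhT -trmx_mul LhJ trmx0 mul0mx vdot0l mulr0.
Qed.

Lemma Lh_form_proj z : vdot z (Lh *m z) = vdot (proj z) (Lh *m proj z).
Proof.
rewrite mulmx_proj_kerJt; apply/eqP; rewrite -subr_eq0 -vdotBl.
by rewrite vdot_sub_proj_kerJt.
Qed.

Lemma vdot_proj_kerJt z v : J^T *m v = 0 -> vdot z v = vdot (proj z) v.
Proof.
move=> Jv; rewrite /proj vdotBl vdotZl [vdot (J *m _) v]vdotC vdot_mulmxr Jv.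
by rewrite vdot0l mulr0 subr0.
Qed.

Lemma Lh_form_ge0 z : 0 <= vdot z (Lh *m z).
Proof.
rewrite Lh_form_proj; apply: le_trans (Lh_ge (proj_kerJtP z)).
by rewrite mulr_ge0 ?vdotvv_ge0.
Qed.

Lemma A_form_ge0 z : 0 <= vdot z (A *m z).
Proof. by apply: le_trans (A_ge z); rewrite mulr_ge0 ?vdotvv_ge0 // ltW. Qed.

Lemma vdot_regularized z : vdot z (B *m z) = vdot z (A *m z) + U * vdot z (Lh *m z).
Proof. by rewrite mulmxDl -scalemxAl vdotDr vdotZr. Qed.

Lemma regularized_unitmx : B \in unitmx.
Proof.
rewrite unitmxE unitfE; apply/negP => /det0P [r r_neq0 rB].
have Brt : B *m r^T = 0.
  by rewrite -[B]trmxK linearD linearZ /= AT LhT -trmx_mul rB trmx0.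
have : mu * vdot r^T r^T <= 0.
  apply: le_trans (A_ge _) _.
  have : vdot r^T (B *m r^T) = 0 by rewrite Brt vdot0r.
  rewrite vdot_regularized => /eqP; rewrite addr_eq0 => /eqP ->.
  by rewrite oppr_le0 mulr_ge0 ?Lh_form_ge0.
rewrite pmulr_rle0 // => r_le0.
have rt0 : r^T = 0 by apply: vdotvv_eq0; apply/eqP; rewrite eq_le r_le0 vdotvv_ge0.
by move: r_neq0; rewrite -[r]trmxK rt0 trmx0 eqxx.
Qed.

Variables (v : 'cV[R]_n).
Hypothesis Jv : J^T *m v = 0.

Local Notation x := (invmx B *m v).

Lemma mul_resolvent : B *m x = v.
Proof. by rewrite mulKVmx // regularized_unitmx. Qed.

Lemma resolvent_form : vdot x v = vdot x (A *m x) + U * vdot x (Lh *m x).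
Proof. by rewrite -vdot_regularized mul_resolvent. Qed.

Lemma resolvent_proj_le : U * rho * vnorm (proj x) <= vnorm v.
Proof.
apply: (@vnorm_mulr_le_cancel _ _ (proj x)) => [->|].
  by rewrite vnorm0 mulr0 vnorm_ge0.
rewrite -mulrA -expr2 vnorm_sqr -mulrA [X in _ <= X]mulrC.
apply: le_trans (vdot_le_vnorm _ v).
rewrite -(vdot_proj_kerJt _ Jv) resolvent_form.
apply: le_trans (_ : _ <= U * vdot x (Lh *m x)) _; last by rewrite lerDr A_form_ge0.
by rewrite ler_wpM2l // Lh_form_proj; apply/Lh_ge/proj_kerJtP.
Qed.

Lemma resolvent_A_form : vdot x (A *m x) = vdot (proj x) (A *m x).
Proof.
have Ax : A *m x = v - U *: (Lh *m x).
  by apply/eqP; rewrite eq_sym subr_eq -{1}mul_resolvent mulmxDl scalemxAl.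
apply/eqP; rewrite -subr_eq0 -vdotBl Ax vdotBr vdotZr.
by rewrite vdot_sub_proj_kerJt mulr0 subr0 vdotBl -(vdot_proj_kerJt _ Jv) subrr.
Qed.

Lemma resolvent_le_proj : mu * vnorm x <= L * vnorm (proj x).
Proof.
apply: (@vnorm_mulr_le_cancel _ _ x) => [->|].
  by rewrite proj_kerJt0 vnorm0 !mulr0.
rewrite -mulrA -expr2 vnorm_sqr; apply: le_trans (A_ge x) _.
rewrite resolvent_A_form vdot_mulmxr AT; apply: le_trans (vdot_le_vnorm _ _) _.
by rewrite ler_wpM2r ?vnorm_ge0.
Qed.

Lemma resolvent_vnorm_le : 0 <= L -> mu * U * rho * vnorm x <= L * vnorm v.
Proof.
move=> L_ge0; have Urho_ge0 : 0 <= U * rho by rewrite mulr_ge0.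
have -> : mu * U * rho * vnorm x = U * rho * (mu * vnorm x) by ring.
apply: le_trans (_ : U * rho * (L * vnorm (proj x)) <= _).
  by rewrite ler_wpM2l ?resolvent_le_proj.
by rewrite mulrCA ler_wpM2l ?resolvent_proj_le.
Qed.

End ResolventBound.

Theorem lemma4 (R : rcfType) (N d : nat) (Lap : 'M[R]_N) (rho2 : R)
  (A : 'M[R]_(N * d)) (mu L U : R) :
  is_laplacian Lap ->
  second_smallest_eig Lap rho2 -> 0 < rho2 ->
  A^T = A ->
  0 < mu -> mu <= L ->
  (forall a : R, eigenvalue A a -> mu <= a <= L) ->
  0 < U ->
  forall v : 'cV[R]_(N * d),
    (ones R N *t (1%:M : 'M[R]_d))^T *m v = 0 ->
    vnorm (invmx (A + U *: (Lap *t (1%:M : 'M[R]_d))) *m v)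
      <= U^-1 * (L / (mu * rho2)) * vnorm v.
Proof.
move=> Lap_lap Lap_rho2 rho2_gt0 AT mu_gt0 mu_le_L eigA U_gt0.
case: N Lap A Lap_lap Lap_rho2 AT eigA => [|N] Lap A Lap_lap Lap_rho2 AT eigA v Jv.
  by rewrite /vnorm !big_ord0 sqrtr0 mulr0.
have [LapT _ Lap1] := Lap_lap; have L_ge0 := le_trans (ltW mu_gt0) mu_le_L.
have A_ge : forall y, mu * vdot y y <= vdot y (A *m y).
  by apply: symmetric_form_ge => // a /eigA /andP [].
have A_le : forall y, vnorm (A *m y) <= L * vnorm y.
  apply: symmetric_vnorm_le => // a /eigA /andP [mu_le_a a_le_L].
  by rewrite ger0_norm // (le_trans (ltW mu_gt0)).
set J := ones R N.+1 *t (1%:M : 'M[R]_d); set Lh := Lap *t (1%:M : 'M[R]_d).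
have Lh_ge := tens_form_ge (d := d) (laplacian_form_ge Lap_lap Lap_rho2 rho2_gt0).
have LhT : Lh^T = Lh by rewrite /Lh trmx_tens trmx1 LapT.
have LhJ : Lh *m J = 0 by rewrite /Lh /J tensmx_mul Lap1 tens0mx.
have N_neq0 : (N.+1%:R : R) != 0 by rewrite pnatr_eq0.
have := resolvent_vnorm_le AT LhT LhJ (@tens_ones_gram R d N.+1) N_neq0 A_ge A_le Lh_ge
  mu_gt0 (ltW rho2_gt0) (ltW U_gt0) Jv L_ge0.
have muUrho_gt0 : 0 < mu * U * rho2 by rewrite !mulr_gt0.
have -> : U^-1 * (L / (mu * rho2)) = (mu * U * rho2)^-1 * L.
  by field; rewrite !gt_eqF.
by move=> bound; rewrite -mulrA ler_pdivlMl.
Qed.
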